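(* Consider a finite discounted stochastic game which is a common interest game. Then for every decision maker $i\in\{1,\dots,N\}$, every $\bm{\pi}^*\in\bm{\Pi}_{\rm opt}$ and every $\tilde{\bm{\pi}}\in\bm{\Pi}\setminus\bm{\Pi}_{\rm opt}$, \[ \sum_{x\in\mathbb{X}} Q^{*i}_{\bm{\pi}^{*-i}}\big(x,\pi^{*i}(x)\big) \;<\; \sum_{x\in\mathbb{X}} Q^{*i}_{\tilde{\bm{\pi}}^{-i}}\big(x,\tilde{\pi}^{i}(x)\big). \]
   Context: A finite discounted stochastic game consists of $N\ge 1$ decision makers DM$^1,\dots,$DM$^N$; a finite state set $\mathbb{X}$; for each $i$ a finite action set $\mathbb{U}^i$, a discount factor $\beta^i\in(0,1)$ and a cost function $c^i:\mathbb{X}\times\mathbb{U}\to\mathbb{R}$, where $\mathbb{U}=\mathbb{U}^1\times\cdots\times\mathbb{U}^N$; and a transition kernel $P(\cdot\mid x,\mathbf{u})$, a probability distribution on $\mathbb{X}$ for each $(x,\mathbf{u})\in\mathbb{X}\times\mathbb{U}$. Let $\Pi^i$ be the set of all maps $\pi^i:\mathbb{X}\to\mathbb{U}^i$ (stationary deterministic policies), $\bm{\Pi}=\Pi^1\times\cdots\times\Pi^N$, $\bm{\Pi}^{-i}=\times_{j\ne i}\Pi^j$, and write $\bm{\pi}=(\pi^i,\bm{\pi}^{-i})$, $\bm{\pi}(x)=(\pi^1(x),\dots,\pi^N(x))$. For $\bm{\pi}\in\bm{\Pi}$ and $x\in\mathbb{X}$, $J^i_x(\bm{\pi})=E\big[\sum_{t\ge0}(\beta^i)^t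 c^i(x_t,\bm{\pi}(x_t))\mid x_0=x\big]$, where $x_{t+1}\sim P(\cdot\mid x_t,\bm{\pi}(x_t))$. For $\bm{\pi}^{-i}\in\bm{\Pi}^{-i}$, $Q^{*i}_{\bm{\pi}^{-i}}\in\mathbb{R}^{\mathbb{X}\times\mathbb{U}^i}$ denotes the optimal Q-factors of the MDP faced by DM$^i$ when the others use $\bm{\pi}^{-i}$, i.e. the unique solution of $Q(x,u^i)=c^i(x,u^i,\bm{\pi}^{-i}(x))+\beta^i\sum_{x'}P(x'\mid x,u^i,\bm{\pi}^{-i}(x))\min_{v\in\mathbb{U}^i}Q(x',v)$. The set of team-optimal policies is $\bm{\Pi}_{\rm opt}=\{\bm{\pi}^*\in\bm{\Pi}: J^i_x(\bm{\pi}^* )=\inf_{\bm{\pi}\in\bm{\Pi}}J^i_x(\bm{\pi})\ \forall i,\forall x\in\mathbb{X}\}$. The game is a common interest game if (i) $\bm{\Pi}_{\rm opt}\neq\emptyset$ and (ii) for every $\tilde{\bm{\pi}}\in\bm{\Pi}\setminus\bm{\Pi}_{\rm opt}$ and every $i$, $\inf_{\bm{\pi}\in\bm{\Pi}}\sum_{x\in\mathbb{X}}J^i_x(\bm{\pi})<\sum_{x\in\mathbb{X}}J^i_x(\tilde{\bm{\pi}})$. *)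

From mathcomp Require Import all_boot.
From Stdlib Require Import Reals ClassicalEpsilon.

Set Implicit Arguments.
Unset Strict Implicit.
Unset Printing Implicit Defensive.

Definition rsum (T : finType) (f : T -> R) : R := \big[Rplus/0%R]_(x : T) f x.

(* minimum over a (nonempty) finite type; 0 if the type is empty *)
Definition rmin (T : finType) (f : T -> R) : R :=
  match enum T with
  | [::] => 0%R
  | a :: s => foldr (fun y m => Rmin (f y) m) (f a) s
  end.

(* the value of a series sum_t u t when it converges (0 otherwise) *)
Definition series (u : nat -> R) : R :=
  match excluded_middle_informative (exists l, infinite_sum u l) with
  | left h => proj1_sig (constructive_indefinite_description _ h)
  | right _ => 0%R
  end.

Section Game.
Variables (N : nat) (X : finType) (Ui : 'I_N -> finType).

(* joint actions and stationary deterministic policy profiles *)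
Definition jaction := forall i : 'I_N, Ui i.
Definition profile := forall i : 'I_N, X -> Ui i.

Definition prof_act (pi : profile) (x : X) : jaction := fun i => pi i x.

Definition upd_act (i : 'I_N) (ui : Ui i) (a : jaction) : jaction :=
  fun j => match (i =P j) with
           | ReflectT e => ecast j (Ui j) e ui
           | ReflectF _ => a j
           end.

Variables (P : X -> jaction -> X -> R) (c : 'I_N -> X -> jaction -> R)
          (beta : 'I_N -> R).

Fixpoint dist (pi : profile) (x : X) (t : nat) : X -> R :=
  match t with
  | O => fun y => if y == x then 1%R else 0%R
  | S t' => fun y => rsum (fun z => (dist pi x t' z * P z (prof_act pi z) y)%R)
  end.

Definition Jcost (i : 'I_N) (pi : profile) (x : X) : R :=
  series (fun t => (beta i ^ t * rsum (fun y => dist pi x t y * c i y (prof_act pi y)))%R).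

(* Q is the optimal Q-factor of DM i's MDP when the others use pi^{-i}
   (the unique solution of the Bellman optimality equation) *)
Definition is_Qstar (i : 'I_N) (pi : profile) (Q : X -> Ui i -> R) : Prop :=
  forall x ui,
    Q x ui = (c i x (upd_act ui (prof_act pi x))
              + beta i * rsum (fun x' => P x (upd_act ui (prof_act pi x)) x'
                                         * rmin (Q x')))%R.

Definition team_opt (pis : profile) : Prop :=
  forall i x (pi : profile), (Jcost i pis x <= Jcost i pi x)%R.

Definition common_interest : Prop :=
  (exists pis, team_opt pis) /\
  forall (pit : profile), ~ team_opt pit ->
    forall i, exists pi : profile,
      (rsum (fun x => Jcost i pi x) < rsum (fun x => Jcost i pit x))%R.

End Game.

(* For a team-optimal profile pis and a non-team-optimal profile pit, DM i's
   optimal Q-factors Qs (against pis^{-i}) and Qt (against pit^{-i}) satisfy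
     (a) Qs x (pis^i x) <= J^i_x(pis)      (Qs is a sub-solution of the
                                            policy-evaluation equation of pis);
     (b) J^i_x(pis) <= min_u Qt x u         (playing greedily w.r.t. Qt against
                                            pit^{-i} achieves min Qt, and pis is
                                            team-optimal);
     (c) if Qt x (pit^i x) = J^i_x(pis) for all x, then J^i_x(pit) <= J^i_x(pis)
         (Qt(., pit^i) is then a super-solution of the equation of pit).
   If the strict inequality failed, (a) and (b) force the equality of (c); but
   then sum_x J^i_x(pit) <= sum_x J^i_x(pis) <= sum_x J^i_x(pi) for every pi,
   contradicting the common interest property for the non-optimal pit. *)

From HB Require Import structures.
From Pilot Require Import Defs.
From mathcomp Require Import all_boot.
From Stdlib Require Import Reals Lra ClassicalEpsilon FunctionalExtensionality.
From Coquelicot Require Import Coquelicot.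

Set Implicit Arguments.
Unset Strict Implicit.

(* (R, +, 0, * ) as a commutative monoid with a distributive multiplication,
   so that the generic bigop lemmas apply to rsum. *)
HB.instance Definition _ := Monoid.isComLaw.Build R 0%R Rplus
  (fun a b c => esym (Rplus_assoc a b c)) Rplus_comm Rplus_0_l.
HB.instance Definition _ := Monoid.isMulLaw.Build R 0%R Rmult Rmult_0_l Rmult_0_r.
HB.instance Definition _ :=
  Monoid.isAddLaw.Build R Rmult Rplus Rmult_plus_distr_r Rmult_plus_distr_l.

Open Scope R_scope.

Section FiniteSums.
Variable T : finType.
Implicit Types f g : T -> R.

Lemma rsum_ext f g : (forall x, f x = g x) -> rsum f = rsum g.
Proof. by move=> fg; apply: eq_bigr => x _. Qed.

Lemma rsum_le f g : (forall x, f x <= g x) -> rsum f <= rsum g.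
Proof.
move=> fg; apply: (big_ind2 (fun a b => a <= b)) => //; first lra.
by move=> *; apply: Rplus_le_compat.
Qed.

Lemma rsum_minus f g : rsum (fun x => f x - g x) = rsum f - rsum g.
Proof.
rewrite /rsum /Rminus big_split /=; congr (_ + _).
by rewrite (big_morph Ropp Ropp_plus_distr Ropp_0).
Qed.

Lemma rsum_scal a f : rsum (fun x => a * f x) = a * rsum f.
Proof. by rewrite /rsum big_distrr. Qed.

Lemma rsum_scal_r a f : rsum (fun x => f x * a) = rsum f * a.
Proof. by rewrite Rmult_comm -rsum_scal; apply: rsum_ext => x; lra. Qed.

Lemma rsum_indicator x f : rsum (fun z => (if z == x then 1 else 0) * f z) = f x.
Proof.
rewrite /rsum (bigD1 x) //= eqxx big1 ?Rplus_0_r ?Rmult_1_l //.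
by move=> y /negbTE ->; rewrite Rmult_0_l.
Qed.

Lemma rsum_ge_term f x : (forall y, 0 <= f y) -> f x <= rsum f.
Proof.
move=> f_ge0; rewrite /rsum (bigD1 x) //=.
have : 0 <= \big[Rplus/0]_(y | y != x) f y.
  by apply: big_ind => //; [lra | move=> *; lra].
lra.
Qed.

Lemma rsum_abs f : Rabs (rsum f) <= rsum (fun x => Rabs (f x)).
Proof.
apply: (big_ind2 (fun a b => Rabs a <= b)) => //.
- by rewrite Rabs_R0; lra.
- move=> a b a' b' ab a'b'.
  by apply: Rle_trans (Rabs_triang _ _) _; lra.
- by move=> *; lra.
Qed.

Lemma rsum_le_eq f g :
  (forall x, f x <= g x) -> rsum g <= rsum f -> forall x, f x = g x.
Proof.
move=> fg sum_gf x.
have diff_ge0 : forall y, 0 <= g y - f y by move=> y; have := fg y; lra.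
have := rsum_ge_term x diff_ge0; rewrite rsum_minus; have := fg x; lra.
Qed.

End FiniteSums.

Lemma rsum_exchange (T U : finType) (f : T -> U -> R) :
  rsum (fun x => rsum (fun y => f x y)) = rsum (fun y => rsum (fun x => f x y)).
Proof. exact: exchange_big. Qed.

Section FiniteMin.

Lemma foldr_min_le (T : eqType) (f : T -> R) a s v : v \in a :: s ->
  foldr (fun y m => Rmin (f y) m) (f a) s <= f v.
Proof.
elim: s => [|b s IH] /=; first by rewrite inE => /eqP ->; lra.
rewrite !inE => /orP [/eqP v_a | /orP [/eqP -> | v_s]].
- by apply: Rle_trans (Rmin_r _ _) _; apply: IH; rewrite inE v_a eqxx.
- exact: Rmin_l.
- by apply: Rle_trans (Rmin_r _ _) _; apply: IH; rewrite inE v_s orbT.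
Qed.

Lemma foldr_min_attained (T : eqType) (f : T -> R) a s :
  exists2 v, v \in a :: s & foldr (fun y m => Rmin (f y) m) (f a) s = f v.
Proof.
elim: s => [|b s IH] /=; first by exists a; rewrite ?inE ?eqxx.
have [v v_in ->] := IH; rewrite /Rmin; case: Rle_dec => _; first by exists b; rewrite ?inE ?eqxx ?orbT.
by exists v => //; move: v_in; rewrite !inE => /orP [->|->]; rewrite ?orbT.
Qed.

Variable T : finType.

Lemma rmin_le (f : T -> R) v : rmin f <= f v.
Proof.
rewrite /rmin; have : v \in enum T by rewrite mem_enum.
by case: (enum T) => // a s; apply: foldr_min_le.
Qed.

Lemma rmin_attained (f : T -> R) (v0 : T) : exists v, rmin f = f v.
Proof.
rewrite /rmin; have : v0 \in enum T by rewrite mem_enum.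
case: (enum T) => // a s _.
by have [v _ ->] := foldr_min_attained f a s; exists v.
Qed.

Lemma argmax_exists (f : T -> R) (v0 : T) : exists v, forall y, f y <= f v.
Proof.
have [v min_v] := rmin_attained (fun y => - f y) v0.
by exists v => y; have := rmin_le (fun y => - f y) y; rewrite min_v; lra.
Qed.

Lemma rmin_selector (A : Type) (F : A -> T -> R) (v0 : T) :
  exists g : A -> T, forall a, rmin (F a) = F a (g a).
Proof.
exists (fun a => proj1_sig (constructive_indefinite_description _
                              (rmin_attained (F a) v0))).
by move=> a; case: constructive_indefinite_description.
Qed.

End FiniteMin.

Lemma is_series_bigsum (T : Type) (f : T -> nat -> R) (s : seq T) :
  (forall z, ex_series (f z)) ->
  is_series (fun k => \big[Rplus/0]_(z <- s) f z k) (\big[Rplus/0]_(z <- s) Series (f z)).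
Proof.
move=> f_cv; elim: s => [|z s IH].
  have zero_series : is_series (fun k => 0 * (/2) ^ k) (0 * / (1 - / 2)).
    by apply: is_series_scal_l; apply: is_series_geom; rewrite Rabs_pos_eq; lra.
  rewrite [X in is_series _ X]Rmult_0_l in zero_series; rewrite big_nil.
  by apply: is_series_ext zero_series => k; rewrite big_nil Rmult_0_l.
rewrite big_cons; apply: is_series_ext (is_series_plus _ _ _ _ (Series_correct _ (f_cv z)) IH).
by move=> k; rewrite big_cons.
Qed.

Lemma Series_rsum (T : finType) (f : T -> nat -> R) :
  (forall z, ex_series (f z)) ->
  Series (fun k => rsum (fun z => f z k)) = rsum (fun z => Series (f z)).
Proof. by move=> f_cv; apply: is_series_unique; apply: is_series_bigsum. Qed.

Lemma series_Series u : ex_series u -> series u = Series u.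
Proof.
move=> [l ul]; rewrite /series; case: excluded_middle_informative => [cv | ncv].
  case: constructive_indefinite_description => l' /= ul'.
  by symmetry; apply: is_series_unique; apply/is_series_Reals.
by exfalso; apply: ncv; exists l; apply/is_series_Reals.
Qed.

Section DiscountedChain.
Variables (X : finType) (K : X -> X -> R) (cst : X -> R) (b : R).
Hypothesis K_ge0 : forall x y, 0 <= K x y.
Hypothesis K_sum1 : forall x, rsum (fun y => K x y) = 1.
Hypothesis b_range : 0 <= b < 1.

(* law of the chain at time t started at x (forward recursion, as in Defs.dist) *)
Fixpoint chain_dist (x : X) (t : nat) : X -> R :=
  match t with
  | O => fun y => if y == x then 1 else 0
  | S t' => fun y => rsum (fun z => chain_dist x t' z * K z y)
  end.

(* Chapman-Kolmogorov, first step first: needed for the Bellman equation. *)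
Lemma chain_dist_first_step t x y :
  chain_dist x t.+1 y = rsum (fun z => K x z * chain_dist z t y).
Proof.
elim: t x y => [|t IH] x y.
  rewrite [LHS]rsum_indicator -(rsum_indicator y (K x)).
  by apply: rsum_ext => z; rewrite /= eq_sym Rmult_comm.
change (rsum (fun z => chain_dist x t.+1 z * K z y)
        = rsum (fun z => K x z * chain_dist z t.+1 y)).
rewrite (rsum_ext (g := fun z => rsum (fun w => K x w * chain_dist w t z * K z y))).
  rewrite rsum_exchange; apply: rsum_ext => w; rewrite [chain_dist w _ y]/= -rsum_scal.
  by apply: rsum_ext => z; rewrite Rmult_assoc.
by move=> z; rewrite IH -rsum_scal_r.
Qed.

Definition exp_cost (t : nat) (x : X) : R := rsum (fun y => chain_dist x t y * cst y).

Definition chain_value (x : X) : R := series (fun t => b ^ t * exp_cost t x).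

Lemma exp_cost_0 x : exp_cost 0 x = cst x.
Proof. exact: rsum_indicator. Qed.

Lemma exp_cost_S t x : exp_cost t.+1 x = rsum (fun z => K x z * exp_cost t z).
Proof.
rewrite /exp_cost (rsum_ext (g := fun y => rsum (fun z => K x z * chain_dist z t y * cst y))).
  rewrite rsum_exchange; apply: rsum_ext => z; rewrite -rsum_scal.
  by apply: rsum_ext => y; rewrite Rmult_assoc.
by move=> y; rewrite chain_dist_first_step -rsum_scal_r.
Qed.

Lemma exp_cost_bound t x : Rabs (exp_cost t x) <= rsum (fun y => Rabs (cst y)).
Proof.
elim: t x => [|t IH] x.
  by rewrite exp_cost_0; apply: rsum_ge_term => y; apply: Rabs_pos.
rewrite exp_cost_S; apply: Rle_trans (rsum_abs _) _.
rewrite -[X in _ <= X]Rmult_1_l -(K_sum1 x) -rsum_scal_r; apply: rsum_le => z.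
by rewrite Rabs_mult Rabs_pos_eq //; apply: Rmult_le_compat_l.
Qed.

Lemma ex_series_value x : ex_series (fun t => b ^ t * exp_cost t x).
Proof.
pose M := rsum (fun y => Rabs (cst y)).
apply: (@ex_series_le _ _ _ (fun t => scal M (b ^ t))).
  move=> t; change (Rabs (b ^ t * exp_cost t x) <= M * b ^ t).
  have bt_ge0 : 0 <= b ^ t by apply: pow_le; lra.
  rewrite Rabs_mult Rabs_pos_eq // Rmult_comm.
  by apply: Rmult_le_compat_r => //; apply: exp_cost_bound.
by apply: ex_series_scal_l; apply: ex_series_geom; rewrite Rabs_pos_eq; lra.
Qed.

Lemma chain_value_bellman x :
  chain_value x = cst x + b * rsum (fun z => K x z * chain_value z).
Proof.
have cv := ex_series_value x.
rewrite {1}/chain_value series_Series // Series_incr_1 //= Rmult_1_l exp_cost_0.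
congr (_ + _).
rewrite (Series_ext _ (fun t => b * rsum (fun z => K x z * (b ^ t * exp_cost t z)))).
  rewrite Series_scal_l Series_rsum.
    congr (_ * _); apply: rsum_ext => z.
    by rewrite Series_scal_l /chain_value series_Series //; apply: ex_series_value.
  move=> z; apply: ex_series_ext (ex_series_scal_l (K x z) _ (ex_series_value z)).
  by move=> t; rewrite /scal /= /mult.
by move=> t; rewrite exp_cost_S -rsum_scal -rsum_scal /=; apply: rsum_ext => z; lra.
Qed.

Lemma discounted_average_le0 (D : X -> R) :
  (forall x, D x <= b * rsum (fun y => K x y * D y)) -> forall x, D x <= 0.
Proof.
move=> D_le x; have [x0 max_x0] := argmax_exists D x.
suff : D x0 <= 0 by have := max_x0 x; lra.
have avg_le : rsum (fun y => K x0 y * D y) <= D x0.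
  rewrite -[X in _ <= X]Rmult_1_l -(K_sum1 x0) -rsum_scal_r.
  by apply: rsum_le => y; apply: Rmult_le_compat_l.
have := D_le x0; have := Rmult_le_compat_l b _ _ (proj1 b_range) avg_le; nra.
Qed.

Lemma chain_value_ge_sub (W : X -> R) :
  (forall x, W x <= cst x + b * rsum (fun y => K x y * W y)) ->
  forall x, W x <= chain_value x.
Proof.
move=> W_sub x; suff : W x - chain_value x <= 0 by lra.
apply: (@discounted_average_le0 (fun x => W x - chain_value x)) => {}x.
rewrite (rsum_ext (g := fun y => K x y * W y - K x y * chain_value y)); last by move=> y; lra.
by rewrite rsum_minus; have := W_sub x; have := chain_value_bellman x; lra.
Qed.

Lemma chain_value_le_super (W : X -> R) :
  (forall x, cst x + b * rsum (fun y => K x y * W y) <= W x) ->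
  forall x, chain_value x <= W x.
Proof.
move=> W_super x; suff : chain_value x - W x <= 0 by lra.
apply: (@discounted_average_le0 (fun x => chain_value x - W x)) => {}x.
rewrite (rsum_ext (g := fun y => K x y * chain_value y - K x y * W y)); last by move=> y; lra.
by rewrite rsum_minus; have := W_super x; have := chain_value_bellman x; lra.
Qed.

End DiscountedChain.

Section Game.
Variables (N : nat) (X : finType) (Ui : 'I_N -> finType)
  (P : X -> jaction Ui -> X -> R) (c : 'I_N -> X -> jaction Ui -> R)
  (beta : 'I_N -> R).
Hypothesis beta_range : forall i, 0 < beta i < 1.
Hypothesis P_ge0 : forall x a y, 0 <= P x a y.
Hypothesis P_sum1 : forall x a, rsum (fun y => P x a y) = 1.

Definition deviate (pi : profile X Ui) (i : 'I_N) (s : X -> Ui i) : profile X Ui :=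
  fun j => match i =P j with
           | ReflectT e => ecast j (X -> Ui j) e s
           | ReflectF _ => pi j
           end.

Lemma prof_act_deviate pi i (s : X -> Ui i) x :
  prof_act (deviate pi s) x = upd_act (s x) (prof_act pi x).
Proof.
apply: functional_extensionality_dep => j; rewrite /prof_act /deviate /upd_act.
by case: (i =P j) => [e|//]; case: j / e.
Qed.

Lemma upd_act_own (pi : profile X Ui) i x :
  upd_act (pi i x) (prof_act pi x) = prof_act pi x.
Proof.
apply: functional_extensionality_dep => j; rewrite /prof_act /upd_act.
by case: (i =P j) => [e|//]; case: j / e.
Qed.

Lemma Jcost_chain_value i pi x :
  Jcost P c beta i pi x =
  chain_value (fun z y => P z (prof_act pi z) y) (fun y => c i y (prof_act pi y)) (beta i) x.
Proof.
have dist_eq : forall t y, Defs.dist P pi x t y =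
    chain_dist (fun z y => P z (prof_act pi z) y) x t y.
  elim=> [|t IH] y //=; by apply: rsum_ext => z; rewrite IH.
rewrite /Jcost /chain_value /exp_cost; f_equal; apply: functional_extensionality => t.
by f_equal; apply: rsum_ext => y; rewrite dist_eq.
Qed.

Lemma Jcost_ge_sub i pi (W : X -> R) :
  (forall x, W x <= c i x (prof_act pi x)
                    + beta i * rsum (fun y => P x (prof_act pi x) y * W y)) ->
  forall x, W x <= Jcost P c beta i pi x.
Proof.
move=> W_sub x; rewrite Jcost_chain_value; apply: chain_value_ge_sub => //.
by have := beta_range i; lra.
Qed.

Lemma Jcost_le_super i pi (W : X -> R) :
  (forall x, c i x (prof_act pi x)
             + beta i * rsum (fun y => P x (prof_act pi x) y * W y) <= W x) ->
  forall x, Jcost P c beta i pi x <= W x.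
Proof.
move=> W_super x; rewrite Jcost_chain_value; apply: chain_value_le_super => //.
by have := beta_range i; lra.
Qed.

Lemma backup_le i x a (W V : X -> R) : (forall y, W y <= V y) ->
  c i x a + beta i * rsum (fun y => P x a y * W y)
  <= c i x a + beta i * rsum (fun y => P x a y * V y).
Proof.
move=> WV; apply: Rplus_le_compat_l; apply: Rmult_le_compat_l.
  by have := beta_range i; lra.
by apply: rsum_le => y; apply: Rmult_le_compat_l.
Qed.

Variables (i : 'I_N) (pi : profile X Ui) (Q : X -> Ui i -> R).
Hypothesis Q_opt : is_Qstar P c beta pi Q.

Lemma Qstar_own_le_Jcost x : Q x (pi i x) <= Jcost P c beta i pi x.
Proof.
move: x; apply: (Jcost_ge_sub (W := fun x => Q x (pi i x))) => x.
rewrite Q_opt upd_act_own.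
by apply: backup_le => y; apply: rmin_le.
Qed.

Lemma team_Jcost_le_Qstar_min (pis : profile X Ui) :
  team_opt P c beta pis -> forall x, Jcost P c beta i pis x <= rmin (Q x).
Proof.
move=> pis_opt x; have [g g_min] := rmin_selector Q (pi i x).
apply: Rle_trans (pis_opt i x (deviate pi g)) _; move: x.
apply: (Jcost_le_super (W := fun x => rmin (Q x))) => x.
by rewrite prof_act_deviate g_min Q_opt; lra.
Qed.

Lemma Jcost_le_team_of_Qstar_eq (pis : profile X Ui) :
  team_opt P c beta pis ->
  (forall x, Q x (pi i x) = Jcost P c beta i pis x) ->
  forall x, Jcost P c beta i pi x <= Jcost P c beta i pis x.
Proof.
move=> pis_opt Q_eq x; rewrite -Q_eq; move: x.
apply: (Jcost_le_super (W := fun x => Q x (pi i x))) => x.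
rewrite [X in _ <= X]Q_opt upd_act_own.
by apply: backup_le => y; rewrite Q_eq; apply: team_Jcost_le_Qstar_min.
Qed.

End Game.

Close Scope R_scope.

Theorem lemma1 (N : nat) (X : finType) (Ui : 'I_N -> finType)
  (P : X -> jaction Ui -> X -> R) (c : 'I_N -> X -> jaction Ui -> R)
  (beta : 'I_N -> R) :
  (0 < N)%N ->
  (forall i, 0 < beta i < 1)%R ->
  (forall x a y, 0 <= P x a y)%R ->
  (forall x a, rsum (fun y => P x a y) = 1)%R ->
  common_interest P c beta ->
  forall (i : 'I_N) (pis pit : profile X Ui),
    team_opt P c beta pis -> ~ team_opt P c beta pit ->
    forall (Qs Qt : X -> Ui i -> R),
      is_Qstar P c beta pis Qs -> is_Qstar P c beta pit Qt ->
      (rsum (fun x => Qs x (pis i x)) < rsum (fun x => Qt x (pit i x)))%R.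
Proof.
Local Open Scope R_scope.
move=> _ beta_range P_ge0 P_sum1 [_ common] i pis pit pis_opt pit_nopt Qs Qt Qs_opt Qt_opt.
pose Js := Jcost P c beta i pis.
apply: Rnot_le_lt => sum_Qt_le.
have Qt_ge_Js : forall x, Js x <= Qt x (pit i x).
  move=> x; apply: Rle_trans (rmin_le _ (pit i x)).
  exact: team_Jcost_le_Qstar_min.
have sum_Qt_le_Js : rsum (fun x => Qt x (pit i x)) <= rsum Js.
  apply: Rle_trans sum_Qt_le _; apply: rsum_le => x.
  exact: Qstar_own_le_Jcost.
have Qt_eq_Js := rsum_le_eq Qt_ge_Js sum_Qt_le_Js.
have pit_le_pis : forall x, Jcost P c beta i pit x <= Js x.
  by apply: Jcost_le_team_of_Qstar_eq => // x; rewrite Qt_eq_Js.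
have [pi sum_pi_lt] := common pit pit_nopt i.
have sum_pit_le : rsum (fun x => Jcost P c beta i pit x) <= rsum (fun x => Js x).
  exact: rsum_le.
have sum_pis_le : rsum (fun x => Js x) <= rsum (fun x => Jcost P c beta i pi x).
  by apply: rsum_le => x; apply: pis_opt.
lra.
Qed.
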